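(* Let $n\ge1$ and let $f$ be a positive integral frieze on the orbifold $P_n^\star$, where $\star$ is an orbifold point of order $3$. Then there exists a unique triangulation $T$ of $P_n^\star$ such that $f(\tau)=1$ for all $\tau\in T$.
   Context: Let $p\ge2$ and $\lambda_p=2\cos(\pi/p)$. $P_n^\star$ is a polygon with boundary vertices $v_0,\ldots,v_{n-1}$ (clockwise, indices mod $n$) and one interior orbifold point $\star$ of order $p$; it is the quotient of the polygon $P_{pn}$ by rotation through $2\pi/p$. Arcs on $P_n^\star$ are the images of rotation-invariant orbits of diagonals (and boundary edges) of $P_{pn}$ that are pairwise non-crossing within the orbit; concretely they are: standard arcs $(v_i,v_j)$, $i\ne j$, the curve from $v_i$ to $v_j$ such that $v_{i+1},\ldots,v_{j-1}$ lie on the side not containing $\star$ (for $j=i+1$ this is a boundary segment), and pending arcs $(v_i,v_i)$, a loop at $v_i$ cutting out a monogon containing $\star$ (image of the orbit of the diameter-type diagonals $(u_i,u_{i+n})$ of $P_{pn}$). A triangulation of $P_n^\star$ is the image of a maximal rotation-invariant set of non-crossing diagonals of $P_{pn}$, equivalently a maximal set of pairwise non-crossing arcs. A frieze on $P_n^\star$ with values in an integral domain $R$ is a function $f$ from arcs to $R$ with $f(\gamma)=1$ for every boundary segment $\gamma$ and respecting skein relations: whenever arcs $\tau,\tau'$ cross at a point, $f(\tau)f(\tau')=f(\Gamma^+)+f(\Gamma^-)$ where $\Gamma^\pm$ are the two multicurves obtained by smoothing that crossing in the two possible ways, $f$ of a multicurve is the product over its components, self-crossings produced are smoothed recursively in the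 same way, a contractible closed curve has value $-2$, and a closed curve enclosing $\star$ has value $\lambda_p$. In particular for two distinct pending arcs, $f(v_i,v_i)f(v_j,v_j)=f(v_i,v_j)^2+\lambda_pf(v_i,v_j)f(v_j,v_i)+f(v_j,v_i)^2$. The frieze is positive integral if all values lie in $\mathbb{Z}_{>0}$. *)

From mathcomp Require Import all_boot all_order all_algebra.
Set Implicit Arguments. Unset Strict Implicit. Unset Printing Implicit Defensive.
Import Order.TTheory GRing.Theory Num.Theory.
Local Open Scope ring_scope.

(* The orbifold P_n^star with n = m.+1 boundary vertices v_0..v_{m}
   (indices mod n) and one orbifold point star.

   Curves are described through lifts to the universal cover of the
   disk minus star: a strip whose marked boundary points are the
   integers x (x lies over v_{x mod n}); translation by n is the deck
   transformation.  A curve with lift (x, x+d), d >= 1, starts at v_x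
   and goes clockwise to v_{x+d}, the boundary vertices v_{x+1} ..
   v_{x+d-1} lying on the side not containing star.

   Arcs on P_n^star are exactly the lifts with 1 <= d <= n:
     d < n : standard arc (v_x, v_{x+d})  (d = 1 : boundary segment),
     d = n : pending arc (v_x, v_x).
   An arc is encoded as (i, k) : 'I_n * 'I_n, meaning lift (i, i + k.+1). *)

Definition orbarc (m : nat) := ('I_m.+1 * 'I_m.+1)%type.

Definition arc_of (m x len : nat) : orbarc m :=
  (inord (x %% m.+1), inord len.-1).

Definition is_boundary (m : nat) (t : orbarc m) : bool := (t.2 == 0 :> nat).

Definition lift_start (m : nat) (t : orbarc m) (a : nat) : Prop :=
  (a %% m.+1)%N = t.1.

(* t and t' cross: some lifts (a, a+d) of t and (c, c+d') of t' are
   strictly interleaved, a < c < a+d < c+d'.  Each orbit of such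
   interleaved lift pairs is one crossing point in the orbifold. *)
Definition cross_lifts (m : nat) (t t' : orbarc m) (a c : nat) : Prop :=
  [/\ lift_start t a, lift_start t' c,
      (a < c)%N, (c < a + t.2.+1)%N & (a + t.2.+1 < c + t'.2.+1)%N].

Definition arcs_cross (m : nat) (t t' : orbarc m) : Prop :=
  (exists a c, cross_lifts t t' a c) \/ (exists a c, cross_lifts t' t a c).

(* Value of the (generalized) curve with lift (x, y), x < y, obtained by
   smoothing a crossing of two arcs.  If y - x <= n it is an arc.
   Otherwise n < y - x < 2n (this is always the case for such curves) and
   the curve has exactly one self-crossing; smoothing it yields
   lam * f(v_x, v_{x+e}) + f(v_{x+e}, v_x)   where e = y - x - n,
   (the closed curve around star has value lam), as in the paper's
   relation f(v_i,v_i) f(v_j,v_j) = f(i,j)^2 + lam f(i,j) f(j,i) + f(j,i)^2. *)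
Definition gval (R : idomainType) (lam : R) (m : nat) (f : orbarc m -> R)
    (x y : nat) : R :=
  let len := (y - x)%N in
  if (len <= m.+1)%N then f (arc_of m x len)
  else lam * f (arc_of m x (len - m.+1))
       + f (arc_of m (x + (len - m.+1)) (2 * m.+1 - len)).

(* For lifts a < c < b < e the two
   smoothings give the multicurves {(a,c),(b,e)} and {(a,e),(c,b)}. *)
Definition is_frieze (R : idomainType) (lam : R) (m : nat) (f : orbarc m -> R)
    : Prop :=
  (forall t : orbarc m, is_boundary t -> f t = 1) /\
  (forall (t t' : orbarc m) (a c : nat), cross_lifts t t' a c ->
     f t * f t' =
       gval lam f a c * gval lam f (a + t.2.+1) (c + t'.2.+1)
     + gval lam f a (c + t'.2.+1) * gval lam f c (a + t.2.+1)).

(* lambda_3 = 2 cos (pi/3) = 1 *)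
Definition lambda3 : int := 1.

(* Triangulation: a maximal set of pairwise non-crossing arcs which are
   not boundary segments (images of diagonals of P_{3n}). *)
Definition triangulation (m : nat) (T : {set orbarc m}) : Prop :=
  [/\ (forall t, t \in T -> ~~ is_boundary t),
      (forall t t', t \in T -> t' \in T -> ~ arcs_cross t t') &
      (forall t, ~~ is_boundary t -> t \notin T ->
          exists2 t', t' \in T & arcs_cross t t')].

From mathcomp Require Import all_boot all_order all_algebra.
From mathcomp Require Import zify lra.
Import Order.TTheory GRing.Theory Num.Theory.
Set Implicit Arguments. Unset Strict Implicit. Unset Printing Implicit Defensive.

(* Two arcs of value 1 cannot cross, since the skein relation would write 1 as
   a sum of two products of positive integers.  So any triangulation on which
   f is 1 is contained in the set of arcs of value 1, and it remains to show
   that this set is a maximal non-crossing family.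
   On the universal cover, f becomes a function F on pairs of integers which is
   invariant under translation by n, satisfies the Ptolemy relations inside a
   fundamental window and, because lambda_3 = 1, also
   F(x, y) = F(x, y - n) + F(y - n, x + n) for n < y - x < 2n.  Growth of the
   row F(0, .) forces an ear F(j - 1, j + 1) = 1, and removing the ear in every
   period gives such an F of period n - 1; by induction some pending arc has
   value 1.  Cutting along it leaves a Conway-Coxeter frieze on an
   (n + 1)-gon, in which every diagonal of value other than 1 crosses one of
   value 1, while every arc not inside this polygon crosses the pending arc. *)

Lemma recurrence_increasing (N : nat) (h q : nat -> int) :
  h 0 = 0%R -> h 1 = 1%R ->
  (forall j, 0 < j < N -> (2 <= q j)%R) ->
  (forall j, 0 < j < N -> (h j.-1 + h j.+1 = q j * h j)%R) ->
  forall i j, i < j <= N -> (h i < h j)%R.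
Proof.
move=> h0 h1 q2 rec.
have step j : j < N -> (h j + 1 <= h j.+1)%R /\ (0 <= h j)%R.
  elim: j => [|j IH] jN; first by rewrite h0 h1.
  have [IH1 IH2] := IH (ltnW jN).
  have := rec j.+1 jN; have := q2 j.+1 jN; rewrite /=; split; nra.
move=> i; elim=> [|j IH] // /andP[ij jN].
have [hj _] := step j jN.
rewrite ltnS leq_eqVlt in ij; case/orP: ij => [/eqP-> | ij]; first lra.
have := IH (introT andP (conj ij (ltnW jN))); lra.
Qed.

Record polygon_frieze (k : nat) (F : nat -> nat -> int) : Prop := {
  pf_side : forall i, i.+1 < k -> F i i.+1 = 1%R;
  pf_close : F 0 k.-1 = 1%R;
  pf_pos : forall i j, (0 < F i j)%R;
  pf_ptolemy : forall a b c d, a < b -> b < c -> c < d -> d < k ->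
    (F a c * F b d = F a b * F c d + F a d * F b c)%R }.

Definition diag_cross (x y x' y' : nat) : bool :=
  (x < x' < y) && (y < y') || (x' < x < y') && (y' < y).

(* [lia] does not see through the boolean-to-nat coercions in [bump] and
   [unbump], so their comparisons are case-split first. *)
Ltac case_bump := rewrite /bump /unbump; repeat match goal with
  | |- context [nat_of_bool (?h <= ?i)] => case: (leqP h i) => ?
  | |- context [nat_of_bool (?h < ?i)] => case: (ltnP h i) => ?
  end; rewrite ?add0n ?add1n ?subn0 ?subn1.

Lemma ltn_bump2 h i j : (bump h i < bump h j) = (i < j).
Proof. by rewrite !ltnNge leq_bump2. Qed.

Lemma diag_cross_bump h x y x' y' :
  diag_cross (bump h x) (bump h y) (bump h x') (bump h y') = diag_cross x y x' y'.
Proof. by rewrite /diag_cross !ltn_bump2. Qed.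

Section PolygonFrieze.
Variables (k : nat) (F : nat -> nat -> int).

Lemma polygon_ear : 3 < k -> polygon_frieze k F ->
  exists2 j, 0 < j < k.-1 & F j.-1 j.+1 = 1%R.
Proof.
move=> k3 [side close pos ptolemy].
pose ear (j : 'I_k) := (0 < j < k.-1) && (F j.-1 j.+1 == 1%R).
have [j /andP[jr /eqP ej] | no_ear] := pickP ear; first by exists j.
pose h j := if j == 0 then 0%R else F 0 j.
pose q j := F j.-1 j.+1.
have q2 j : 0 < j < k.-1 -> (2 <= q j)%R.
  move=> jr; have jk : j < k by lia.
  have := no_ear (Ordinal jk); rewrite /ear /= jr /= => /eqP.
  have := pos j.-1 j.+1; rewrite /q; lia.
have rec j : 0 < j < k.-1 -> (h j.-1 + h j.+1 = q j * h j)%R.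
  case: j => [//|[_ | j jr]]; first by rewrite /h /q /= add0r side ?mulr1 //; lia.
  have := ptolemy 0 j.+1 j.+2 j.+3; rewrite /h /q /= !side; lia.
have h1 : h 1 = 1%R by rewrite /h side //; lia.
have := recurrence_increasing erefl h1 q2 rec (i := 1) (j := k.-1).
rewrite h1 /h close; have -> : (k.-1 == 0) = false by apply/negbTE; lia.
rewrite ltxx; lia.
Qed.

Lemma polygon_frieze_delete_ear j : polygon_frieze k.+1 F -> 0 < j < k ->
  F j.-1 j.+1 = 1%R -> polygon_frieze k (fun a b => F (bump j a) (bump j b)).
Proof.
move=> [side close pos ptolemy] jr ear; split => //.
- move=> i ik; case_bump; try lia; try by apply: side; lia.
  by rewrite -ear; congr F; lia.
- by case_bump; try lia; rewrite -close; congr F; lia.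
- by move=> a b c d ab bc cd dk; apply: ptolemy; case_bump; lia.
Qed.
End PolygonFrieze.

Lemma polygon_frieze_cross_one k F x y : polygon_frieze k F ->
  x.+1 < y < k -> (0 < x) || (y < k.-1) -> F x y != 1%R ->
  exists x' y', [/\ F x' y' = 1%R, y' < k & diag_cross x y x' y'].
Proof.
elim: k F x y => [|k IH] F x y Fk xyk not_close Fxy; first lia.
have [k3|k3] := leqP k 2; first lia.
have [j jr ear] := polygon_ear (k := k.+1) k3 Fk.
have ear_cross : (x == j) || (y == j) -> diag_cross x y j.-1 j.+1.
  by rewrite /diag_cross; lia.
case: (boolP ((x == j) || (y == j))) => [xyj | /norP[xj yj]].
  by exists j.-1, j.+1; split => //; [lia | exact: ear_cross].
have not_ear : ~ (x = j.-1 /\ y = j.+1) by move=> [ex ey]; rewrite ex ey ear in Fxy.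
have diag' : (unbump j x).+1 < unbump j y < k by move: not_ear xj yj; case_bump; lia.
have not_close' : (0 < unbump j x) || (unbump j y < k.-1).
  by move: not_close xj yj; case_bump; lia.
have Fxy' : F (bump j (unbump j x)) (bump j (unbump j y)) != 1%R.
  by rewrite !unbumpK ?inE.
have [x' [y' [F'xy y'k cross]]] :=
  IH _ _ _ (polygon_frieze_delete_ear Fk jr ear) diag' not_close' Fxy'.
exists (bump j x'), (bump j y'); split => //.
  by move: y'k; case_bump; lia.
by rewrite -[x](unbumpK xj) -[y](unbumpK yj) diag_cross_bump.
Qed.

(* [F x y] is the value of the curve whose lift to the universal cover of the
   punctured polygon goes from the marked point [x] to [y]; [lf_long] is the
   resolution of the self-crossing of such a curve when [n < y - x < 2n], the
   loop around the orbifold point having value [lambda3 = 1]. *)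
Record lifted_frieze (n : nat) (F : nat -> nat -> int) : Prop := {
  lf_side : forall x, F x x.+1 = 1%R;
  lf_periodic : forall x y, F (x + n) (y + n) = F x y;
  lf_pos : forall x y, (0 < F x y)%R;
  lf_long : forall x y, x + n < y -> y < x + 2 * n ->
    F x y = (F x (y - n)%N + F (y - n)%N (x + n)%N)%R;
  lf_ptolemy : forall w x y z, w < x -> x < y -> y < z -> y <= w + n -> z <= x + n ->
    (F w y * F x z = F w x * F y z + F w z * F x y)%R }.

Section LiftedFrieze.
Variables (n : nat) (F : nat -> nat -> int).
Hypothesis HF : lifted_frieze n F.

Lemma lf_periodicM c x y : F (x + c * n) (y + c * n) = F x y.
Proof.
elim: c => [|c IH]; first by rewrite !addn0.
by rewrite mulSn (addnC n) !addnA (lf_periodic HF).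
Qed.

Lemma lf_window_polygon i : F i (i + n) = 1%R -> polygon_frieze n.+1 (fun u v => F (i + u) (i + v)).
Proof.
move=> pend; split => /=.
- by move=> u _; rewrite addnS (lf_side HF).
- by rewrite addn0.
- by move=> u v; apply: (lf_pos HF).
- by move=> a b c d ab bc cd dn; apply: (lf_ptolemy HF); lia.
Qed.

Lemma lf_row_rec w y : 1 < n -> w < y.-1 -> y <= w + n ->
  (F w y.-1 + F w y.+1 = F y.-1 y.+1 * F w y)%R.
Proof.
move=> n1 wy yw; have yy : y.-1 < y by lia.
have yz : y.+1 <= y.-1 + n by lia.
have := lf_ptolemy HF wy yy (ltnSn y) yw yz; rewrite (lf_side HF).
have -> : F y.-1 y = 1%R by rewrite -(lf_side HF y.-1); congr F; lia.
lra.
Qed.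

Lemma lf_col_rec y z : 1 < n -> 0 < y -> y.+1 < z -> z <= y + n ->
  (F y.-1 z + F y.+1 z = F y.-1 y.+1 * F y z)%R.
Proof.
move=> n1 y0 yz zy; have yy : y.-1 < y by lia.
have yn : y.+1 <= y.-1 + n by lia.
have := lf_ptolemy HF yy (ltnSn y) yz yn zy; rewrite (lf_side HF).
have -> : F y.-1 y = 1%R by rewrite -(lf_side HF y.-1); congr F; lia.
lra.
Qed.

(* With no ear, the row [h] would increase strictly along [0 .. 2n] by
   [recurrence_increasing]; but [lf_long] continues the row [F 0] past [n] as
   [row + col], which returns to [F 0 n] at [2n]. *)
Section Ear.
Hypothesis n1 : 1 < n.

Let q j := F j.-1 j.+1.
Let row (e : nat) := if e == 0 then 0%R else F 0 e.
Let col (e : nat) := if e == n then 0%R else F e n.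
Let h (j : nat) := if j <= n then row j else (row (j - n)%N + col (j - n)%N)%R.

Let row_rec e : 0 < e <= n -> (row e.-1 + row e.+1 = q e * row e)%R.
Proof.
rewrite /row /q; case: e => [//|[_ | e /andP[_ en]]] /=.
  by rewrite add0r (lf_side HF) mulr1.
by apply: (lf_row_rec (y := e.+2)).
Qed.

Let col_rec e : 0 < e < n -> (col e.-1 + col e.+1 = q e * col e)%R.
Proof.
move=> /andP[e0 en]; rewrite /col /q /=.
have [-> -> ] : (e.-1 == n) = false /\ (e == n) = false by split; apply/negbTE; lia.
have [e1n | e1n] := eqVneq e.+1 n.
  by rewrite -e1n (lf_side HF) addr0 mulr1.
by apply: (lf_col_rec (y := e)); lia.
Qed.

Let h_row j : j < 2 * n -> h j = row j.
Proof.
rewrite /h /row /col => j2n; case: ifP => // /negbT jn.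
have [-> -> ->] : [/\ (j - n == 0) = false, (j - n == n) = false & (j == 0) = false].
  by split; apply/negbTE; lia.
by rewrite (lf_long HF (x := 0) (y := j)) add0n //; lia.
Qed.

Let h_shift e : e <= n -> h (n + e) = (row e + col e)%R.
Proof.
rewrite /h /row /col => en; case: ifP => [ne | _]; last by rewrite addKn.
have -> : e = 0 by lia.
by rewrite addn0 add0r !ifF //; apply/negbTE; lia.
Qed.

Let h_rec j : 0 < j < 2 * n -> (h j.-1 + h j.+1 = q j * h j)%R.
Proof.
move=> /andP[j0 j2n]; have [jn | nj] := leqP j n.
  by rewrite !h_row ?row_rec ?j0; lia.
have [e [-> e0 en]] : exists e, [/\ j = n + e, 0 < e & e < n].
  by exists (j - n); split; lia.
have -> : (n + e).-1 = n + e.-1 by lia.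
have -> : q (n + e) = q e by rewrite /q -(lf_periodic HF e.-1); congr F; lia.
rewrite -addnS !h_shift; try lia.
rewrite mulrDr -row_rec -?col_rec ?e0 ?en //; last lia.
by rewrite addrACA.
Qed.

Lemma lifted_ear : exists2 j, 0 < j & F j.-1 j.+1 = 1%R.
Proof.
pose ear (j : 'I_(2 * n)) := (0 < j) && (q j == 1%R).
have [j /andP[j0 /eqP ej] | no_ear] := pickP ear; first by exists j.
have q2 j : 0 < j < 2 * n -> (2 <= q j)%R.
  move=> /andP[j0 j2n]; have := no_ear (Ordinal j2n); rewrite /ear /= j0 => /eqP.
  have := lf_pos HF j.-1 j.+1; rewrite /q; lia.
have h1 : h 1 = 1%R by rewrite h_row /row ?(lf_side HF) //; lia.
have h0 : h 0 = 0%R by rewrite h_row /row //; lia.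
have := recurrence_increasing h0 h1 q2 h_rec (i := n) (j := 2 * n).
have -> : 2 * n = n + n by lia.
rewrite h_shift // /col eqxx addr0 h_row ?ltxx; lia.
Qed.

End Ear.
End LiftedFrieze.

(* [skip_mult k] enumerates the naturals that are not multiples of [k.+2]. *)
Definition skip_mult (k x : nat) := x + 1 + x %/ k.+1.

Lemma skip_multD k x : skip_mult k (x + k.+1) = skip_mult k x + k.+2.
Proof. by rewrite /skip_mult -{2}(mul1n k.+1) divnDMl //; lia. Qed.

Lemma skip_mult_lt k x y : x < y -> skip_mult k x < skip_mult k y.
Proof. by move=> xy; have := leq_div2r k.+1 (ltnW xy); rewrite /skip_mult; lia. Qed.

Lemma skip_mult_le k x y : x <= y -> skip_mult k x <= skip_mult k y.
Proof. by move=> xy; have := leq_div2r k.+1 xy; rewrite /skip_mult; lia. Qed.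

Lemma skip_multS k x : skip_mult k x.+1 = (skip_mult k x).+1 \/
  k.+2 %| (skip_mult k x).+1 /\ skip_mult k x.+1 = (skip_mult k x).+2.
Proof.
rewrite /skip_mult divnS //; case: (boolP (k.+1 %| x.+1)) => d /=; last by left; lia.
right; split; last by lia.
have := divnK d; rewrite divnS // d => e.
by apply/dvdnP; exists (x %/ k.+1).+1; lia.
Qed.

Lemma lifted_frieze_delete_ear k F j : lifted_frieze k.+2 F -> 0 < j ->
  F j.-1 j.+1 = 1%R ->
  lifted_frieze k.+1 (fun x y => F (skip_mult k x + j) (skip_mult k y + j)).
Proof.
move=> HF j0 ear; split.
- move=> x; have [-> | [/dvdnP[c ec] ->]] := skip_multS k x.
    by rewrite addSn (lf_side HF).
  by rewrite -ear -[RHS](lf_periodicM HF c); congr F; lia.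
- by move=> x y; rewrite !skip_multD !(addnAC _ k.+2) (lf_periodic HF).
- by move=> x y; apply: (lf_pos HF).
- move=> x y xy yx.
  have h1 : skip_mult k x + k.+2 < skip_mult k y by rewrite -skip_multD skip_mult_lt.
  have h2 : skip_mult k y < skip_mult k x + 2 * k.+2.
    have := skip_mult_lt k yx; rewrite (_ : x + 2 * k.+1 = x + k.+1 + k.+1); last lia.
    by rewrite !skip_multD; lia.
  have ey : skip_mult k y = skip_mult k (y - k.+1) + k.+2.
    by rewrite -skip_multD; congr skip_mult; lia.
  rewrite (lf_long HF (x := skip_mult k x + j) (y := skip_mult k y + j)); try lia.
  by rewrite skip_multD; congr (F _ _ + F _ _)%R; lia.
- move=> w x y z wx xy yz yw zx.
  have := skip_mult_le k yw; have := skip_mult_le k zx; rewrite !skip_multD.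
  have := skip_mult_lt k wx; have := skip_mult_lt k xy; have := skip_mult_lt k yz.
  by move=> *; apply: (lf_ptolemy HF); lia.
Qed.

Lemma lifted_frieze_pending k F : lifted_frieze k.+1 F -> exists i, F i (i + k.+1) = 1%R.
Proof.
elim: k F => [|k IH] F HF; first by exists 0; rewrite (lf_side HF).
have [j j0 ear] := lifted_ear HF (isT : 1 < k.+2).
have [i] := IH _ (lifted_frieze_delete_ear HF j0 ear).
rewrite skip_multD => ei; exists (skip_mult k i + j).
by rewrite -ei; congr F; lia.
Qed.

Section OrbifoldArcs.
Variable m : nat.

Lemma arc_of_start x d : (arc_of m x d).1 = x %% m.+1 :> nat.
Proof. by rewrite /= inordK // ltn_mod. Qed.

Lemma arc_of_len x d : d <= m.+1 -> (arc_of m x d).2 = d.-1 :> nat.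
Proof. by move=> dn; rewrite /= inordK //; lia. Qed.

Lemma is_boundary_arc_of x d : 0 < d <= m.+1 -> is_boundary (arc_of m x d) = (d == 1).
Proof. by case/andP=> d0 dn; rewrite /is_boundary arc_of_len //; case: d d0 dn => [|[|d]]. Qed.

Lemma arc_ofDn x d : arc_of m (x + m.+1) d = arc_of m x d.
Proof. by rewrite /arc_of modnDr. Qed.

Lemma arc_of_lift (t : orbarc m) a : lift_start t a -> arc_of m a t.2.+1 = t.
Proof.
case: t => [t1 t2] /= ta; congr pair; apply: val_inj.
  by rewrite /= -ta inordK // ltn_mod.
by rewrite /= inordK.
Qed.

Lemma cross_lifts_arc_of x d c e : x < c < x + d -> x + d < c + e ->
  d <= m.+1 -> e <= m.+1 -> cross_lifts (arc_of m x d) (arc_of m c e) x c.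
Proof.
move=> xc ce dn en; rewrite /cross_lifts /lift_start !arc_of_start !arc_of_len //.
split => //; lia.
Qed.

Lemma arcs_crossC (t t' : orbarc m) : arcs_cross t t' -> arcs_cross t' t.
Proof. by case=> ?; [right | left]. Qed.

Lemma arcs_cross_arc_of x d c e : x < c < x + d -> x + d < c + e ->
  d <= m.+1 -> e <= m.+1 -> arcs_cross (arc_of m x d) (arc_of m c e).
Proof. by move=> *; left; exists x, c; apply: cross_lifts_arc_of. Qed.

End OrbifoldArcs.

Section OrbifoldFrieze.
Variables (m : nat) (f : orbarc m -> int).
Hypothesis frieze_f : is_frieze lambda3 f.
Hypothesis f_pos : forall t, (0 < f t)%R.

Lemma gval_short x y : y - x <= m.+1 -> gval lambda3 f x y = f (arc_of m x (y - x)).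
Proof. by move=> yx; rewrite /gval yx. Qed.

Lemma gval_pos x y : (0 < gval lambda3 f x y)%R.
Proof. by rewrite /gval; case: ifP => _ //; rewrite mul1r addr_gt0. Qed.

Lemma frieze_lift : lifted_frieze m.+1 (gval lambda3 f).
Proof.
have [side skein] := frieze_f; split.
- move=> x; rewrite gval_short; last lia.
  by apply: side; rewrite /is_boundary arc_of_len; lia.
- move=> x y; rewrite /gval (_ : y + m.+1 - (x + m.+1) = y - x); last lia.
  by case: ifP => _; rewrite arc_ofDn // addnAC arc_ofDn.
- exact: gval_pos.
- move=> x y xy yx; rewrite {1}/gval ifF; last by apply/negbTE; lia.
  rewrite /lambda3 mul1r !gval_short; try lia.
  have e1 : y - x - m.+1 = y - m.+1 - x by lia.
  have e2 : x + (y - x - m.+1) = y - m.+1 by lia.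
  have e3 : 2 * m.+1 - (y - x) = x + m.+1 - (y - m.+1) by lia.
  by rewrite e2 e3 e1.
- move=> w x y z wx xy yz yw zx.
  have cr : cross_lifts (arc_of m w (y - w)) (arc_of m x (z - x)) w x.
    by apply: cross_lifts_arc_of; lia.
  have := skein _ _ _ _ cr; rewrite !arc_of_len; try lia.
  have -> : w + (y - w).-1.+1 = y by lia.
  have -> : x + (z - x).-1.+1 = z by lia.
  by rewrite -!gval_short //; lia.
Qed.

Lemma frieze_unit_arcs_noncross t t' : arcs_cross t t' -> f t = 1%R -> f t' = 1%R -> False.
Proof.
move=> cr ft ft'; have [_ skein] := frieze_f.
have sum_gt1 (b1 b2 b3 b4 : int) : (0 < b1)%R -> (0 < b2)%R -> (0 < b3)%R -> (0 < b4)%R ->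
    1%R <> (b1 * b2 + b3 * b4)%R.
  by move=> p1 p2 p3 p4; have := mulr_gt0 p1 p2; have := mulr_gt0 p3 p4; lia.
by case: cr => -[a [c /skein]]; rewrite ft ft' mulr1; apply: sum_gt1; apply: gval_pos.
Qed.

Definition unit_arcs := [set t : orbarc m | ~~ is_boundary t && (f t == 1%R)].

Lemma frieze_pending_unit : exists2 i, i < m.+1 & f (arc_of m i m.+1) = 1%R.
Proof.
have [i0] := lifted_frieze_pending frieze_lift.
rewrite gval_short addKn ?leqnn // => p1.
exists (i0 %% m.+1); first by rewrite ltn_mod.
by rewrite -p1 /arc_of modn_mod.
Qed.

Lemma unit_arc_cross_window i x y : f (arc_of m i m.+1) = 1%R ->
  i <= x -> x.+1 < y <= i + m.+1 -> (i < x) || (y < i + m.+1) ->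
  f (arc_of m x (y - x)) != 1%R ->
  exists2 t', t' \in unit_arcs & arcs_cross (arc_of m x (y - x)) t'.
Proof.
move=> p1 ix xy not_p ft.
have p1' : gval lambda3 f i (i + m.+1) = 1%R by rewrite gval_short addKn.
have [|||x' [y' [F'1 y'n cr]]] :=
  polygon_frieze_cross_one (lf_window_polygon frieze_lift p1') (x := x - i) (y := y - i).
- lia.
- lia.
- by rewrite subnKC // subnKC ?gval_short; lia.
have x'y' : x'.+1 < y' by move: cr; rewrite /diag_cross; lia.
exists (arc_of m (i + x') (y' - x')).
  have e : i + y' - (i + x') = y' - x' by lia.
  have F1 : f (arc_of m (i + x') (y' - x')) = 1%R by rewrite -e -gval_short //; lia.
  by rewrite inE F1 eqxx andbT is_boundary_arc_of; lia.
case/orP: cr => cr; last apply: arcs_crossC.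
all: by apply: arcs_cross_arc_of; lia.
Qed.

Lemma unit_arcs_maximal t : ~~ is_boundary t -> t \notin unit_arcs ->
  exists2 t', t' \in unit_arcs & arcs_cross t t'.
Proof.
move=> tb tU; have ft : f t != 1%R by move: tU; rewrite inE tb.
have [i il p1] := frieze_pending_unit.
have [a [d [ia dn td]]] :
    exists a d, [/\ i <= a < i + m.+1, 1 < d <= m.+1 & t = arc_of m a d].
  exists (if i <= t.1 then t.1 : nat else t.1 + m.+1), t.2.+1; split.
  - by case: ifP; have := ltn_ord t.1; lia.
  - by rewrite ltnS lt0n tb ltn_ord.
  - by rewrite arc_of_lift // /lift_start; case: ifP => _; rewrite ?modnDr modn_small.
rewrite {}td in ft *.
have [inside | outside] := leqP (a + d) (i + m.+1).
  have not_p : (i < a) || (a + d < i + m.+1).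
    apply: contraR ft => /norP[]; rewrite -!leqNgt => ai ti.
    have [-> ->] : a = i /\ d = m.+1 by lia.
    by rewrite p1.
  have [ia' ad] : i <= a /\ a.+1 < a + d <= i + m.+1 by lia.
  by have := unit_arc_cross_window p1 ia' ad not_p; rewrite addKn; apply.
exists (arc_of m i m.+1).
  by rewrite inE p1 eqxx andbT is_boundary_arc_of; lia.
by apply: arcs_crossC; apply: arcs_cross_arc_of; lia.
Qed.

Lemma unit_arcs_triangulation : triangulation unit_arcs.
Proof.
split.
- by move=> t; rewrite inE => /andP[].
- move=> t t'; rewrite !inE => /andP[_ /eqP ft] /andP[_ /eqP ft'] cr.
  exact: frieze_unit_arcs_noncross cr ft ft'.
- exact: unit_arcs_maximal.
Qed.

End OrbifoldFrieze.

Local Open Scope ring_scope.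

Theorem proposition4p30 (m : nat) (f : orbarc m -> int) :
  is_frieze lambda3 f -> (forall t, 0 < f t) ->
  exists! T : {set orbarc m}, triangulation T /\ (forall t, t \in T -> f t = 1).
Proof.
move=> frieze_f f_pos; exists (unit_arcs f); split.
  split; first exact: unit_arcs_triangulation.
  by move=> t; rewrite inE => /andP[_ /eqP].
move=> T [[T_diag _ T_max] T_unit]; apply/setP => t; rewrite inE.
apply/idP/idP => [/andP[tb /eqP ft] | tT]; last by rewrite T_diag ?T_unit.
apply: contraT => tT; have [t' t'T cr] := T_max t tb tT.
by case: (frieze_unit_arcs_noncross frieze_f f_pos cr ft (T_unit _ t'T)).
Qed.
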